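(* Let $k \geqslant 2$, $\ell \geqslant 0$, and let $A$ be as defined in the context. Then no string accepted by $A$ contains a factor (two consecutive symbols) of the form $a_i a_j$ with $j > i+1$.
   Context: A 2DFA $(\Sigma, Q, q_0, \delta, F)$: $\Sigma$ is a finite alphabet not containing end-markers $\vdash, \dashv$; $Q$ finite set of states; $q_0 \in Q$ initial; $\delta: Q \times (\Sigma \cup \{\vdash,\dashv\}) \to Q \times \{-1,+1\}$ partial; $F \subseteq Q$ accepting. On input $w = b_1\cdots b_m$ it works on tape $\vdash b_1 \cdots b_m \dashv$, starting at $\vdash$ in $q_0$; if $\delta(q,c)=(r,d)$ it enters $r$ and moves one cell in direction $d$; if undefined it rejects; it accepts if it ever arrives at $\dashv$ in a state of $F$; it may loop. Construction of $A$. Fix $k \geqslant 2$, $\ell \geqslant 0$, $Q^+ = \{1, \ldots, k\}$, $Q^- = \{1', \ldots, \ell'\}$, ordered by $i < j$ and $i' < j'$ iff $i < j$. A pair is $(P,R)$ with $P \subseteq Q^-$, $R \subseteq Q^+$, $|R| = |P|+1$. Writing $P = \{p_1 < \cdots < p_m\}$ and $R = \{r_1 < \cdots < r_{m+1}\}$, the sequence of the pair is the integer sequence $(r_1, -p_1, r_2, -p_2, \ldots, r_m, -p_m, r_{m+1})$, where a primed state $i'$ contributes the integer $i$ (so $-p_j$ for $p_j = i'$ is the integer $-i$). Pairs are ordered by the lexicographic order of their sequences (a proper prefix is smaller). Let $N = \binom{k+\ell}{\ell+1}$ be the number of pairs and enumerate them increasingly as $(P^{(1)},R^{(1)}) < \cdots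 < (P^{(N)},R^{(N)})$, with $P^{(i)} = \{p^{(i)}_1 < \cdots < p^{(i)}_{m_i}\}$ and $R^{(i)} = \{r^{(i)}_1 < \cdots < r^{(i)}_{m_i+1}\}$; in particular $(P^{(1)},R^{(1)}) = (\emptyset,\{1\})$ and $(P^{(N)},R^{(N)}) = (\emptyset,\{k\})$. The 2DFA $A$ has alphabet $\Sigma = \{a_1, \ldots, a_{N-1}\}$ (distinct symbols), states $Q = Q^+ \cup Q^-$, initial state $q_0 = 1$, accepting states $F = \{k\}$, and exactly the following transitions: $\delta(1, \vdash) = (r^{(1)}_1, +1)$; and for each $i \in \{1,\ldots,N-1\}$: $\delta(r^{(i)}_j, a_i) = (p^{(i)}_j, -1)$ for $j = 1, \ldots, m_i$; $\delta(r^{(i)}_{m_i+1}, a_i) = (r^{(i+1)}_1, +1)$; $\delta(p^{(i+1)}_j, a_i) = (r^{(i+1)}_{j+1}, +1)$ for $j = 1, \ldots, m_{i+1}$. No transitions are defined at $\dashv$. *)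

From mathcomp Require Import all_boot all_order all_algebra.
Set Implicit Arguments. Unset Strict Implicit. Unset Printing Implicit Defensive.
Import Order.TTheory GRing.Theory Num.Theory.

Inductive tsym := LEnd | REnd | Sym of nat.

Definition tsym_eqb (c d : tsym) : bool :=
  match c, d with
  | LEnd, LEnd => true
  | REnd, REnd => true
  | Sym a, Sym b => a == b
  | _, _ => false
  end.

Inductive dir := L | R.

Record dfa2 (Q : Type) := Dfa2 {
  delta : Q -> tsym -> option (Q * dir);
  q0 : Q;
  final : Q -> bool
}.

(* The tape |- b_1 ... b_m -| : cell 0 is |-, cells 1..m the input,
   cell m+1 is -|. *)
Definition tape (w : seq nat) (p : nat) : option tsym :=
  if p == 0 then Some LEnd
  else if p <= size w then Some (Sym (nth 0 w p.-1))
  else if p == (size w).+1 then Some REnd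
  else None.

Definition step Q (M : dfa2 Q) (w : seq nat) (c : Q * nat) : option (Q * nat) :=
  let: (q, p) := c in
  match tape w p with
  | None => None
  | Some a =>
      match delta M q a with
      | None => None
      | Some (r, R) => Some (r, p.+1)
      | Some (r, L) => if p is p'.+1 then Some (r, p') else None
      end
  end.

(* Configuration after n steps (None once the machine has halted/rejected). *)
Fixpoint run Q (M : dfa2 Q) (w : seq nat) (n : nat) : option (Q * nat) :=
  match n with
  | 0 => Some (q0 M, 0)
  | n'.+1 => obind (step M w) (run M w n')
  end.

Definition accepts Q (M : dfa2 Q) (w : seq nat) : Prop :=
  exists n q, run M w n = Some (q, (size w).+1) /\ final M q.

(* States: (true, i) is i in Q^+, (false, i) is i' in Q^-. *)
Definition state := (bool * nat)%type.
Definition Plus (i : nat) : state := (true, i).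
Definition Minus (i : nat) : state := (false, i).

(* All subsequences of s (for s increasing: all subsets, as increasing lists). *)
Fixpoint sublists (s : seq nat) : seq (seq nat) :=
  match s with
  | [::] => [:: [::]]
  | x :: s' => [seq x :: t | t <- sublists s'] ++ sublists s'
  end.

(* A pair (P,R): P subset of Q^- (as increasing list of indices), R subset of
   Q^+ (increasing list), |R| = |P| + 1. *)
Definition pairs (k l : nat) : seq (seq nat * seq nat) :=
  [seq (P, Rr) | P <- sublists (iota 1 l),
                 Rr <- [seq Rr <- sublists (iota 1 k) | size Rr == (size P).+1]].

Local Open Scope ring_scope.
Fixpoint interleave (Rr P : seq nat) : seq int :=
  match Rr, P with
  | r :: Rr', p :: P' => (r%:Z) :: (- (p%:Z)) :: interleave Rr' P'
  | r :: _, [::] => [:: r%:Z]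
  | [::], _ => [::]
  end.
Definition seq_of_pair (pr : seq nat * seq nat) : seq int := interleave pr.2 pr.1.

Fixpoint lexlt (s t : seq int) : bool :=
  match s, t with
  | [::], _ :: _ => true
  | _, [::] => false
  | x :: s', y :: t' => (x < y)%R || ((x == y) && lexlt s' t')
  end.
Definition lexle (s t : seq int) : bool := (s == t) || lexlt s t.
Local Close Scope ring_scope.

Definition sorted_pairs (k l : nat) : seq (seq nat * seq nat) :=
  sort (fun a b => lexle (seq_of_pair a) (seq_of_pair b)) (pairs k l).

Definition Npairs (k l : nat) : nat := size (pairs k l).

(* The i-th pair (1-based), its P^{(i)}, R^{(i)}, m_i, p^{(i)}_j, r^{(i)}_j. *)
Definition pair_i (k l i : nat) := nth ([::], [::]) (sorted_pairs k l) i.-1.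
Definition Pi (k l i : nat) := (pair_i k l i).1.
Definition Ri (k l i : nat) := (pair_i k l i).2.
Definition mi (k l i : nat) := size (Pi k l i).
Definition pij (k l i j : nat) := nth 0 (Pi k l i) j.-1.
Definition rij (k l i j : nat) := nth 0 (Ri k l i) j.-1.

(* Transition rules (q, c, r, d) meaning delta(q, c) = (r, d). *)
Definition rules (k l : nat) : seq (state * tsym * state * dir) :=
  ((Plus 1, LEnd), Plus (rij k l 1 1), R) ::
  flatten [seq
     [seq ((Plus (rij k l i j), Sym i), Minus (pij k l i j), L) | j <- iota 1 (mi k l i)]
  ++ [:: ((Plus (rij k l i (mi k l i).+1), Sym i), Plus (rij k l i.+1 1), R)]
  ++ [seq ((Minus (pij k l i.+1 j), Sym i), Plus (rij k l i.+1 j.+1), R)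
         | j <- iota 1 (mi k l i.+1)]
  | i <- iota 1 (Npairs k l).-1].

(* delta looks up the (unique, by the paper's construction) matching rule. *)
Definition deltaA (k l : nat) (q : state) (c : tsym) : option (state * dir) :=
  let ms := [seq (x.1.2, x.2) | x <- rules k l & (x.1.1.1 == q) && tsym_eqb x.1.1.2 c] in
  if ms is y :: _ then Some y else None.

Definition A (k l : nat) : dfa2 state :=
  @Dfa2 state (deltaA k l) (Plus 1) (fun q => q == Plus k).

(* Let a_I a_J be adjacent with J > I + 1, and compare the pairs x' = (P', R') of index
   I + 1 and x = (P, R) of index J; x' < x lexicographically.  The head of A can only
   enter the cell of a_J moving right from the cell of a_I, hence in a state r'_u of x',
   at a moment when the sequences of x' and x agree on their first 2(u - 1) entries.
   Reading a_J, the state r'_u must be some r_s of x: lexicographic minimality of x'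
   forces s = u, and s = m + 1 would make x' = x; so A turns left in state p_u.  Back on
   a_I, the state p_u must be some p'_v with a right move into r'_(v+1), and again the
   order forces v = u, extending the agreement by one block.  So A never moves right
   from the cell of a_J and never reaches the right end-marker. *)

From HB Require Import structures.
From mathcomp Require Import all_boot all_order all_algebra zify.
Set Implicit Arguments. Unset Strict Implicit. Unset Printing Implicit Defensive.
Import Order.TTheory GRing.Theory Num.Theory.

Section LexOrder.
Local Open Scope ring_scope.

Lemma lexlt_trans : transitive lexlt.
Proof.
move=> t s u; elim: s t u => [|x s IH] [|y t] [|z u] //=.
case/orP=> [xy|/andP[/eqP-> st]]; case/orP=> [yz|/andP[/eqP<- tu]].
- by rewrite (lt_trans xy yz).
- by rewrite xy.
- by rewrite yz.
- by rewrite (IH _ _ st tu) eqxx orbT.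
Qed.

Lemma lexlt_total s t : s != t -> lexlt s t || lexlt t s.
Proof.
elim: s t => [|x s IH] [|y t] //= st.
case: (ltgtP x y) => //= xy; apply: IH; apply: contra st => /eqP->.
by rewrite xy.
Qed.

Lemma lexle_trans : transitive lexle.
Proof.
move=> t s u /orP[/eqP->//|st] /orP[/eqP<-|tu]; first by rewrite /lexle st orbT.
by rewrite /lexle (lexlt_trans st tu) orbT.
Qed.

Lemma lexle_total : total lexle.
Proof.
move=> s t; rewrite /lexle; case: (eqVneq s t) => [->|st] //=.
exact: lexlt_total.
Qed.

Lemma lexle_head x s y t : lexle (x :: s) (y :: t) -> x <= y.
Proof. by case/orP=> [/eqP[->] _|/orP[/ltW|/andP[/eqP->]]]. Qed.

Lemma lexle_cons x s t : lexle (x :: s) (x :: t) = lexle s t.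
Proof. by rewrite /lexle /= eqseq_cons eqxx ltxx. Qed.

Lemma lexle_catl u s t : lexle (u ++ s) (u ++ t) = lexle s t.
Proof. by elim: u => //= x u IH; rewrite lexle_cons. Qed.

End LexOrder.

Lemma interleave_cat a b Rr P : size a = size b ->
  interleave (a ++ Rr) (b ++ P) = interleave a b ++ interleave Rr P.
Proof. by elim: a b => [|r a IH] [|p b] //= [/IH->]. Qed.

Lemma lexle_interleave_head a X Y b Z W :
  lexle (interleave (a :: X) Y) (interleave (b :: Z) W) -> a <= b.
Proof. by case: Y => [|? ?]; case: W => [|? ?] /= /lexle_head; rewrite lez_nat. Qed.

Lemma ltn_sorted_nth (s : seq nat) i j : sorted ltn s -> i < j -> j < size s ->
  nth 0 s i < nth 0 s j.
Proof.
move=> ss ij js; apply: (sorted_ltn_nth ltn_trans 0 ss) => //.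
by rewrite inE (ltn_trans ij js).
Qed.

Definition wf_pair (x : seq nat * seq nat) : Prop :=
  [/\ sorted ltn x.1, sorted ltn x.2 & size x.2 = (size x.1).+1].

Section LexOrderedPairs.
Variables x' x : seq nat * seq nat.
Local Notation P' := x'.1.
Local Notation R' := x'.2.
Local Notation P := x.1.
Local Notation R := x.2.

Definition agree t :=
  [&& t <= size P', t <= size P, take t R' == take t R & take t P' == take t P].

Hypotheses (wf' : wf_pair x') (wf : wf_pair x).
Hypothesis lexx' : lexle (seq_of_pair x') (seq_of_pair x).

Let sP' : sorted ltn P'. Proof. by case: wf'. Qed.
Let sR' : sorted ltn R'. Proof. by case: wf'. Qed.
Let szR' : size R' = (size P').+1. Proof. by case: wf'. Qed.
Let sP : sorted ltn P. Proof. by case: wf. Qed.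
Let sR : sorted ltn R. Proof. by case: wf. Qed.
Let szR : size R = (size P).+1. Proof. by case: wf. Qed.

Lemma lexle_drop_agree t : agree t ->
  lexle (interleave (drop t R') (drop t P')) (interleave (drop t R) (drop t P)).
Proof.
case/and4P=> tP' tP /eqP eR /eqP eP.
have split_at y : t <= size y.1 -> size y.2 = (size y.1).+1 -> seq_of_pair y =
    interleave (take t y.2) (take t y.1) ++ interleave (drop t y.2) (drop t y.1).
  move=> ty sy; rewrite -interleave_cat ?cat_take_drop //.
  by rewrite !size_takel // sy leqW.
by move: lexx'; rewrite split_at // (split_at x) // eR eP lexle_catl.
Qed.

Lemma agree_R_index t s : agree t -> s < size R -> nth 0 R' t = nth 0 R s -> s = t.
Proof.
move=> ag sR_s e; have /and4P[tP' tP /eqP eR _] := ag.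
case: (ltngtP s t) => // st.
- have eRs : nth 0 R' s = nth 0 R s by rewrite -(nth_take 0 st) eR nth_take.
  have := ltn_sorted_nth sR' st; rewrite szR' ltnS => /(_ tP').
  by rewrite eRs e ltnn.
- have := lexle_drop_agree ag.
  rewrite (drop_nth 0 (s := R')) ?szR' ?ltnS // (drop_nth 0 (s := R)) ?szR ?ltnS //.
  move/lexle_interleave_head; rewrite e leqNgt.
  by rewrite (ltn_sorted_nth sR st sR_s).
Qed.

Lemma agree_last : agree (size P) -> nth 0 R' (size P) = nth 0 R (size P) -> x' = x.
Proof.
move=> ag e; have /and4P[tP' _ /eqP eR /eqP eP] := ag.
have := lexle_drop_agree ag.
rewrite (drop_nth 0 (s := R')) ?szR' ?ltnS // (drop_nth 0 (s := R)) ?szR //.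
rewrite (@drop_oversize _ (size P) P) // (@drop_oversize _ (size P).+1 R) ?szR //= e.
case eP' : (drop (size P) P') => [|p Y]; last first.
  by rewrite /lexle /= ltxx andbF eqseq_cons andbF.
move=> _; have szP' : size P' = size P.
  by apply/eqP; rewrite eqn_leq tP' andbT -subn_eq0 -size_drop eP'.
have eqR : R' = R.
  apply: (eq_from_nth (x0 := 0)) => [|i]; first by rewrite szR szR' szP'.
  rewrite szR' szP' ltnS leq_eqVlt => /orP[/eqP->//|iP].
  by rewrite -(nth_take 0 iP) eR nth_take.
have eqP' : P' = P by rewrite -(take_size P') -(take_size P) szP' eP.
by rewrite [x']surjective_pairing [x]surjective_pairing eqR eqP'.
Qed.

Lemma agree_P_index t u : agree t -> t < size P -> u < size P' ->
  nth 0 R' t = nth 0 R t -> nth 0 P t = nth 0 P' u -> u = t.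
Proof.
move=> ag tP uP' eR e; have /and4P[_ _ _ /eqP eP] := ag.
case: (ltngtP u t) => // ut.
- have ePu : nth 0 P' u = nth 0 P u by rewrite -(nth_take 0 ut) eP nth_take.
  by have := ltn_sorted_nth sP ut tP; rewrite e ePu ltnn.
- have tP' : t < size P' by apply: ltn_trans uP'.
  have := lexle_drop_agree ag.
  rewrite (drop_nth 0 (s := R')) ?szR' ?ltnS ?(ltnW tP') //.
  rewrite (drop_nth 0 (s := R)) ?szR ?ltnS ?(ltnW tP) //.
  rewrite (drop_nth 0 (s := P')) // (drop_nth 0 (s := P)) //= eR lexle_cons.
  move/lexle_head; rewrite lerN2 lez_nat e leqNgt.
  by rewrite (ltn_sorted_nth sP' ut uP').
Qed.

Lemma agree_succ t : agree t -> t < size P -> t < size P' ->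
  nth 0 R' t = nth 0 R t -> nth 0 P' t = nth 0 P t -> agree t.+1.
Proof.
case/and4P=> _ _ /eqP eR /eqP eP tP tP' eRt ePt.
have tR : t < size R by rewrite szR ltnW.
have tR' : t < size R' by rewrite szR' ltnW.
by rewrite /agree tP tP' !(take_nth 0) // eR eP eRt ePt !eqxx.
Qed.

End LexOrderedPairs.

Lemma sublists_subseq s t : t \in sublists s -> subseq t s.
Proof.
elim: s t => [|x s IH] t /=; first by rewrite inE => /eqP->.
rewrite mem_cat => /orP[/mapP[u /IH us ->]|/IH ts]; first by rewrite /= eqxx.
exact: subseq_trans ts (subseq_cons s x).
Qed.

Lemma sublists_uniq s : uniq s -> uniq (sublists s).
Proof.
elim: s => [|x s IH] //= /andP[xs us].
rewrite cat_uniq map_inj_uniq ?IH //; last by move=> a b [].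
rewrite andbT; apply/hasPn => t /sublists_subseq ts; apply/mapP => -[u _ tu].
by move: ts; rewrite tu => /mem_subseq /(_ x); rewrite mem_head (negbTE xs) => /(_ isT).
Qed.

Lemma sorted_sublists_iota a n t : t \in sublists (iota a n) -> sorted ltn t.
Proof.
by move/sublists_subseq/subseq_sorted; apply; [apply: ltn_trans | apply: iota_ltn_sorted].
Qed.

Lemma pairs_wf k l x : x \in pairs k l -> wf_pair x.
Proof.
case/allpairsPdep => P [Rr [hP]]; rewrite mem_filter => /andP[/eqP szR hR] ->.
by split => //; apply: sorted_sublists_iota; [apply: hP | apply: hR].
Qed.

Lemma pairs_uniq k l : uniq (pairs k l).
Proof.
apply: allpairs_uniq_dep => [|P _|[a b] [c d] _ _ /= [-> ->]] //.
  exact/sublists_uniq/iota_uniq.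
by apply: filter_uniq; apply/sublists_uniq/iota_uniq.
Qed.

Section SortedPairs.
Variables k l : nat.

Let size_sorted_pairs : size (sorted_pairs k l) = Npairs k l.
Proof. exact: size_sort. Qed.

Lemma pair_i_wf i : 0 < i <= Npairs k l -> wf_pair (pair_i k l i).
Proof.
move=> iN; apply: pairs_wf.
rewrite /pair_i -(mem_sort (fun a b => lexle (seq_of_pair a) (seq_of_pair b))).
by apply: mem_nth; rewrite size_sorted_pairs; lia.
Qed.

Lemma pair_i_lexle i j : 0 < i <= j -> j <= Npairs k l ->
  lexle (seq_of_pair (pair_i k l i)) (seq_of_pair (pair_i k l j)).
Proof.
move=> ij jN; rewrite /pair_i.
have sorted_lex :
    sorted (fun a b => lexle (seq_of_pair a) (seq_of_pair b)) (sorted_pairs k l).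
  by apply: sort_sorted => a b; apply: lexle_total.
apply: (sorted_leq_nth _ _ _ sorted_lex); rewrite ?inE ?size_sorted_pairs; try lia.
- by move=> b a c; apply: lexle_trans.
- by move=> a; rewrite /lexle eqxx.
Qed.

Lemma pair_i_inj i j : 0 < i <= Npairs k l -> 0 < j <= Npairs k l ->
  pair_i k l i = pair_i k l j -> i = j.
Proof.
move=> iN jN /eqP.
by rewrite /pair_i nth_uniq ?sort_uniq ?pairs_uniq ?size_sorted_pairs; lia.
Qed.

End SortedPairs.

Lemma tsym_eqP : Equality.axiom tsym_eqb.
Proof. by case=> [||a] [||b] /=; apply: (iffP idP) => // [/eqP->|[->]]. Qed.

HB.instance Definition _ := hasDecEq.Build tsym tsym_eqP.

Definition dir_eqb (d e : dir) : bool :=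
  match d, e with L, L | R, R => true | _, _ => false end.

Lemma dir_eqP : Equality.axiom dir_eqb.
Proof. by do 2!case; constructor. Qed.

HB.instance Definition _ := hasDecEq.Build dir dir_eqP.

Section Transitions.
Variables k l : nat.

Lemma mem_rules x : x \in rules k l ->
  [\/ x = ((Plus 1, LEnd), Plus (rij k l 1 1), R),
      exists i, exists2 j, 0 < j <= mi k l i &
        x = ((Plus (rij k l i j), Sym i), Minus (pij k l i j), L),
      exists i, x = ((Plus (rij k l i (mi k l i).+1), Sym i), Plus (rij k l i.+1 1), R) |
      exists i, exists2 j, 0 < j <= mi k l i.+1 &
        x = ((Minus (pij k l i.+1 j), Sym i), Plus (rij k l i.+1 j.+1), R)].
Proof.
rewrite inE => /orP[/eqP->|/flatten_mapP[i _]]; first exact: Or41.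
rewrite !mem_cat mem_seq1 => /or3P[/mapP[j]|/eqP->|/mapP[j]].
- by rewrite mem_iota add1n ltnS => jm ->; apply: Or42; exists i, j.
- by apply: Or43; exists i.
- by rewrite mem_iota add1n ltnS => jm ->; apply: Or44; exists i, j.
Qed.

Lemma deltaA_rule q c v : deltaA k l q c = Some v ->
  exists2 x, x \in rules k l & [/\ x.1.1 = (q, c) & v = (x.1.2, x.2)].
Proof.
rewrite /deltaA; case E: [seq _ | _ <- _ & _] => [|y ys] //= [<-].
have /mapP[x] :
    y \in [seq (x.1.2, x.2) | x <- rules k l & (x.1.1.1 == q) && tsym_eqb x.1.1.2 c].
  by rewrite E mem_head.
rewrite mem_filter => /andP[/andP[/eqP xq /tsym_eqP xc] xr] ->.
by exists x; rewrite // [x.1.1]surjective_pairing xq xc.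
Qed.

Lemma deltaA_R_Plus q c r : deltaA k l q c = Some (r, R) -> exists x, r = Plus x.
Proof.
by case/deltaA_rule=> _ /mem_rules[->|[i [j _ ->]]|[i ->]|[i [j _ ->]]] /= [_ [-> //]];
  eexists.
Qed.

Lemma deltaA_L q a r : deltaA k l q (Sym a) = Some (r, L) ->
  exists2 s, 0 < s <= mi k l a & q = Plus (rij k l a s) /\ r = Minus (pij k l a s).
Proof.
by case/deltaA_rule=> _ /mem_rules[->|[i [j ? ->]]|[i ->]|[i [j _ ->]]] /= [] // [<- <-] [->];
  exists j.
Qed.

Lemma deltaA_Plus_R x a r : deltaA k l (Plus x) (Sym a) = Some (r, R) ->
  x = rij k l a (mi k l a).+1 /\ r = Plus (rij k l a.+1 1).
Proof.
by case/deltaA_rule=> _ /mem_rules[->|[i [j _ ->]]|[i ->]|[i [j _ ->]]] /= [] // [<- <-] [->].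
Qed.

Lemma deltaA_Minus_R x a r : deltaA k l (Minus x) (Sym a) = Some (r, R) ->
  exists2 u, 0 < u <= mi k l a.+1 & x = pij k l a.+1 u /\ r = Plus (rij k l a.+1 u.+1).
Proof.
by case/deltaA_rule=> _ /mem_rules[->|[i [j _ ->]]|[i ->]|[i [j ? ->]]] /= [] // [<- <-] [->];
  exists j.
Qed.

End Transitions.

Lemma step_inv Q (M : dfa2 Q) w q p q' p' : step M w (q, p) = Some (q', p') ->
  exists c d, [/\ tape w p = Some c, delta M q c = Some (q', d)
                & if d is R then p' = p.+1 else p = p'.+1].
Proof.
rewrite /step; case: (tape w p) => [c|] //; case E: (delta M q c) => [[r []]|] //.
- by case: p => [|p] // [<- <-]; exists c, L.
- by case=> <- <-; exists c, R.
Qed.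

Lemma tape_inner w p : 0 < p <= size w -> tape w p = Some (Sym (nth 0 w p.-1)).
Proof. by case: p => [|p] //= pw; rewrite /tape pw. Qed.

Section Confinement.
Variables (k l : nat) (w : seq nat) (t : nat).
Local Notation I := (nth 0 w t).
Local Notation J := (nth 0 w t.+1).
Hypotheses (tw : t.+1 < size w) (IJ : I.+1 < J) (JN : J <= Npairs k l).
Local Notation x' := (pair_i k l I.+1).
Local Notation x := (pair_i k l J).

Let wf' : wf_pair x'. Proof. by apply: pair_i_wf; lia. Qed.
Let wf : wf_pair x. Proof. by apply: pair_i_wf; lia. Qed.
Let lexx' : lexle (seq_of_pair x') (seq_of_pair x).
Proof. by apply: pair_i_lexle; lia. Qed.
Let x'_neq_x : x' <> x.
Proof. by move/pair_i_inj; lia. Qed.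
Let tape_I : tape w t.+1 = Some (Sym I).
Proof. by rewrite tape_inner //; lia. Qed.
Let tape_J : tape w t.+2 = Some (Sym J).
Proof. by rewrite tape_inner //; lia. Qed.

Definition on_I_cell (q : state) : Prop :=
  (exists y, q = Plus y) \/
  exists2 u, agree x' x u &
    [/\ u < size x.1, nth 0 x'.2 u = nth 0 x.2 u & q = Minus (nth 0 x.1 u)].

Definition on_J_cell (q : state) : Prop :=
  exists2 u, agree x' x u & q = Plus (nth 0 x'.2 u).

Definition confined (cfg : state * nat) : Prop :=
  let: (q, p) := cfg in
  [/\ p <= t.+2, p = t.+1 -> on_I_cell q & p = t.+2 -> on_J_cell q].

Lemma confined_left q p : p < t.+1 -> confined (q, p).
Proof. by move=> pt; split; lia. Qed.

Lemma step_from_left q p cfg' : p < t.+1 -> step (A k l) w (q, p) = Some cfg' ->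
  confined cfg'.
Proof.
case: cfg' => q' p' pt /(@step_inv _ (A k l))[c [[] [_ qc pp']]].
  by apply: confined_left; lia.
move: pp' => ->; case: (ltngtP p t) => [pt'||->]; [by apply: confined_left | lia |].
split => // [_|/n_Sn //].
by left; apply: deltaA_R_Plus qc.
Qed.

Lemma step_from_J u cfg' : agree x' x u ->
  step (A k l) w (Plus (nth 0 x'.2 u), t.+2) = Some cfg' -> confined cfg'.
Proof.
have [_ _ szR] := wf.
case: cfg' => q' p' ag /(@step_inv _ (A k l))[c [[] [tc qc pp']]];
  move: tc qc; rewrite tape_J => -[<-] qc.
- have [s sP [[eRs] ->]] := deltaA_L qc.
  have us : s.-1 = u.
    apply: (agree_R_index wf' wf lexx' ag _ eRs).
    by rewrite szR; move: sP; rewrite /mi /Pi; lia.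
  subst u; move: pp' => [<-]; split => // [_|/n_Sn //]; right; exists s.-1 => //.
  by split => //; move: sP; rewrite /mi /Pi; lia.
- have [eRl _] := deltaA_Plus_R qc.
  have us : size x.1 = u.
    by apply: (agree_R_index wf' wf lexx' ag _ eRl); rewrite szR.
  by subst u; case: x'_neq_x; apply: (agree_last wf' wf lexx' ag).
Qed.

Lemma step_from_I q cfg' : on_I_cell q ->
  step (A k l) w (q, t.+1) = Some cfg' -> confined cfg'.
Proof.
case: cfg' => q' p' qI /(@step_inv _ (A k l))[c [[] [tc qc pp']]].
  by apply: confined_left; case: pp' => <-.
move: pp' tc qc => -> /[!tape_I] -[<-] qc; split => // [/esym/n_Sn //|_].
case: qI => [[y qy]|[u ag [uP eR qu]]]; move: qc; rewrite ?qy ?qu.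
  by case/deltaA_Plus_R => _ ->; exists 0; rewrite // /agree !take0.
case/deltaA_Minus_R => u' u'P [ePu ->].
have u'_pos : 0 < u' by case/andP: u'P.
have uu' : u'.-1 = u.
  apply: (agree_P_index wf' wf lexx' ag uP _ eR ePu).
  by move: u'P; rewrite /mi /Pi; lia.
exists u.+1; last by rewrite -uu' prednK.
apply: (agree_succ wf' wf ag uP) => //; first by move: u'P; rewrite /mi /Pi; lia.
by rewrite ePu -uu'.
Qed.

Lemma confined_step cfg cfg' : confined cfg ->
  step (A k l) w cfg = Some cfg' -> confined cfg'.
Proof.
case: cfg => q p [pt qI qJ].
case: (ltngtP p t.+1) => [pt'|tp|pt']; first exact: step_from_left.
  have p_J : p = t.+2 by lia.
  by have [u ag ->] := qJ p_J; rewrite p_J; apply: step_from_J.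
by rewrite pt'; apply: step_from_I (qI pt').
Qed.

Lemma confined_run n cfg : run (A k l) w n = Some cfg -> confined cfg.
Proof.
elim: n cfg => [|n IH] cfg /=; first by case=> <-; apply: confined_left.
by case E: (run (A k l) w n) => [cfg0|] //=; apply: confined_step (IH _ E).
Qed.

End Confinement.

Theorem mainTheorem7 (k l : nat) : 2 <= k ->
  forall w : seq nat,
    all (fun a => (1 <= a) && (a <= (Npairs k l).-1)) w ->
    accepts (A k l) w ->
    forall t : nat, t.+1 < size w -> ~ (nth 0 w t).+1 < nth 0 w t.+1.
Proof.
(* The argument does not use [2 <= k]. *)
move=> _ w w_letters [n [q [run_n _]]] t tw IJ.
have JN : nth 0 w t.+1 <= Npairs k l.
  by have /andP[_ /leq_trans->] := allP w_letters _ (mem_nth 0 tw); rewrite ?leq_pred.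
by have [] := confined_run tw IJ JN run_n; lia.
Qed.
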